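(* Let $r\ge1$, $\mu\in\mathcal P_r$, $n\in\mathbb N$ and $\mathbf p\in\Pi_n$. If $r=1$ or ${\rm supp}\,\mu$ is connected, then there exists $\mathbf x\in\Xi_n$ minimizing $\mathbf y\mapsto d_r(\delta^{\mathbf p}_{\mathbf y},\mu)$ over $\Xi_n$ such that ${\rm supp}\,\delta^{\mathbf p}_{\mathbf x}\subset{\rm supp}\,\mu$.
   Context: $\mathcal P$ denotes the set of Borel probability measures on $\mathbb R$; $\mathcal P_r=\{\mu\in\mathcal P:\int|x|^r{\rm d}\mu(x)<\infty\}$. For $\mu\in\mathcal P$, $F_\mu(x)=\mu(]-\infty,x])$ and $F_\mu^{-1}(t)=\sup\{x: F_\mu(x)\le t\}$, $t\in]0,1[$; ${\rm supp}$ denotes support. $d_r(\mu,\nu)=\big(\int_0^1|F_\mu^{-1}(t)-F_\nu^{-1}(t)|^r{\rm d}t\big)^{1/r}$. $\Xi_n=\{\mathbf x\in\mathbb R^n:x_1\le\dots\le x_n\}$, $\Pi_n=\{\mathbf p\in\mathbb R^n:p_i\ge0,\sum_ip_i=1\}$, $\delta^{\mathbf p}_{\mathbf x}=\sum_ip_i\delta_{x_i}$. *)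

From Stdlib Require Import Reals Lra ClassicalEpsilon.
Open Scope R_scope.

(** A Borel probability measure on R is represented by its distribution
    function F = F_mu (bijective correspondence). *)
Definition is_cdf (F : R -> R) : Prop :=
  (forall x y, x <= y -> F x <= F y) /\
  (forall x eps, 0 < eps -> exists d, 0 < d /\
       forall y, x <= y < x + d -> Rabs (F y - F x) < eps) /\
  (forall eps, 0 < eps -> exists M, forall x, x <= M -> Rabs (F x) < eps) /\
  (forall eps, 0 < eps -> exists M, forall x, M <= x -> Rabs (F x - 1) < eps).

(** Quantile F^{-1}(t) = sup {x : F x <= t} (meaningful for t in ]0,1[). *)
Definition quantile (F : R -> R) (t : R) : R :=
  epsilon (inhabits 0) (fun q => is_lub (fun x => F x <= t) q).

Definition powr (a r : R) : R := if Rle_dec a 0 then 0 else Rpower a r.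

(** [int01 f I]: I is the (finite) integral over ]0,1[ of the nonnegative
    function f, defined as the supremum of Riemann integrals over compact
    subintervals [a,b] of ]0,1[ (= Lebesgue integral for nonnegative f that
    is Riemann integrable on compact subintervals). If the integral is
    +infinity, there is no such I. *)
Definition int01 (f : R -> R) (I : R) : Prop :=
  is_lub (fun v => exists a b (pr : Riemann_integrable f a b),
                      0 < a /\ a <= b /\ b < 1 /\ v = RiemannInt pr) I.

(** [dr_pow r F G c]: c = d_r(mu,nu)^r where F = F_mu, G = F_nu. *)
Definition dr_pow (r : R) (F G : R -> R) (c : R) : Prop :=
  int01 (fun t => powr (Rabs (quantile F t - quantile G t)) r) c.

(** mu in P_r : int |x|^r dmu = int_0^1 |F^{-1}(t)|^r dt < infinity. *)
Definition finite_moment (r : R) (F : R -> R) : Prop :=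
  exists c, int01 (fun t => powr (Rabs (quantile F t)) r) c.

(** Support of mu: x with mu(]x-eps,x+eps[) > 0 for all eps > 0
    (equivalently F(x-eps) < F(x+eps) for all eps > 0). *)
Definition supp (F : R -> R) (x : R) : Prop :=
  forall eps, 0 < eps -> F (x - eps) < F (x + eps).

(** Connected subsets of R = intervals (order-convex sets). *)
Definition connected_set (S : R -> Prop) : Prop :=
  forall a b c, S a -> S b -> a <= c <= b -> S c.

Fixpoint sumR (n : nat) (f : nat -> R) : R :=
  match n with O => 0 | S m => sumR m f + f m end.

(** Pi_n and Xi_n; vectors of length n are functions on indices < n. *)
Definition in_Pi (n : nat) (p : nat -> R) : Prop :=
  (forall i, (i < n)%nat -> 0 <= p i) /\ sumR n p = 1.

Definition in_Xi (n : nat) (x : nat -> R) : Prop :=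
  forall i j, (i <= j < n)%nat -> x i <= x j.

(** Distribution function of delta^p_x = sum_i p_i delta_{x_i}. *)
Definition discrete_cdf (n : nat) (p x : nat -> R) (y : R) : R :=
  sumR n (fun i => if Rle_dec (x i) y then p i else 0).

(** x minimizes y |-> d_r(delta^p_y, mu) over Xi_n (equivalently d_r^r). *)
Definition is_minimizer (r : R) (F : R -> R) (n : nat) (p x : nat -> R) : Prop :=
  exists c, dr_pow r (discrete_cdf n p x) F c /\
    forall y c', in_Xi n y -> dr_pow r (discrete_cdf n p y) F c' -> c <= c'.

(* On the k-th cell [P_k, P_(k+1)] (P_k = p_0 + ... + p_(k-1)) the quantile
   function of delta^p_y is the constant y_k, so d_r(delta^p_y, mu)^r is the sum
   over the cells of int_(P_k)^(P_(k+1)) |y_k - F^{-1}(t)|^r dt, and each cell can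
   be optimised separately.  The cost of a cell is a convex coercive function of
   y_k, hence has a minimiser; projecting it onto the closed hull of the quantiles
   of the cell does not increase the cost and puts it between the quantiles of the
   neighbouring cells, so the atoms come out ordered.  If supp mu is connected, it
   contains that hull.  If r = 1, the quantile at the midpoint of the cell is
   already a minimiser, and quantiles always lie in supp mu.  Atoms with p_k > 0
   lie in supp mu, and the remaining ones are filled in by a running maximum. *)

From Stdlib Require Import Reals Lra Lia RList Arith ClassicalEpsilon Classical.
From Coquelicot Require Import Coquelicot.
Open Scope R_scope.

(** * Powers *)

Lemma powr_ge0 a r : 0 <= powr a r.
Proof. unfold powr; destruct (Rle_dec a 0); [lra | left; apply exp_pos]. Qed.

Lemma powr_gt0 a r : 0 < a -> powr a r = Rpower a r.
Proof. intros Ha; unfold powr; destruct (Rle_dec a 0); [lra | easy]. Qed.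

Lemma powr_le0 a r : a <= 0 -> powr a r = 0.
Proof. intros Ha; unfold powr; destruct (Rle_dec a 0); [easy | lra]. Qed.

Lemma powr_le_compat a b r : 0 <= r -> a <= b -> powr a r <= powr b r.
Proof.
  intros Hr Hab; destruct (Rle_dec a 0).
  - rewrite powr_le0 by easy; apply powr_ge0.
  - rewrite !powr_gt0 by lra; apply Rle_Rpower_l; lra.
Qed.

Lemma powr_1 a : 0 <= a -> powr a 1 = a.
Proof.
  intros Ha; destruct (Req_dec a 0) as [->|].
  - apply powr_le0; lra.
  - rewrite powr_gt0 by lra; apply Rpower_1; lra.
Qed.

Lemma powr_mult k a r : 0 < k -> 0 <= a -> powr (k * a) r = Rpower k r * powr a r.
Proof.
  intros Hk Ha; destruct (Req_dec a 0) as [->|].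
  - rewrite Rmult_0_r, !powr_le0 by lra; ring.
  - rewrite !powr_gt0 by nra; symmetry; apply Rpower_mult_distr; lra.
Qed.

Lemma powr_ge_id a r : 1 <= r -> 1 <= a -> a <= powr a r.
Proof.
  intros Hr Ha; rewrite powr_gt0 by lra.
  rewrite <- (Rpower_1 a) at 1 by lra; apply Rle_Rpower; lra.
Qed.

(* [x ^ r = x * exp ((r - 1) ln x)], and [1 + y <= exp y] is used twice:
   with [y = (r - 1) ln x] and, to get [x ln x >= x - 1], with [y = - ln x]. *)
Lemma powr_bernoulli x r : 1 <= r -> 0 <= x -> 1 + r * (x - 1) <= powr x r.
Proof.
  intros Hr Hx; destruct (Req_dec x 0) as [->|Hx0].
  { rewrite powr_le0 by lra; lra. }
  rewrite powr_gt0 by lra; unfold Rpower.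
  replace (r * ln x) with (ln x + (r - 1) * ln x) by ring.
  rewrite exp_plus, exp_ln by lra.
  assert (Hexp : 1 + (r - 1) * ln x <= exp ((r - 1) * ln x)) by apply exp_ineq1_le.
  assert (Hinv : 1 + - ln x <= / x).
  { rewrite <- (exp_ln x), <- exp_Ropp, exp_ln by lra; apply exp_ineq1_le. }
  assert (Hxln : x - 1 <= x * ln x).
  { apply Rmult_le_compat_l with (r := x) in Hinv; [|lra].
    rewrite Rinv_r in Hinv by lra; lra. }
  assert (x * (1 + (r - 1) * ln x) <= x * exp ((r - 1) * ln x))
    by (apply Rmult_le_compat_l; lra).
  nra.
Qed.

Lemma powr_tangent u m r : 1 <= r -> 0 <= u -> 0 < m ->
  powr m r + r * (powr m r / m) * (u - m) <= powr u r.
Proof.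
  intros Hr Hu Hm.
  replace u with (m * (u / m)) at 2 by (field; lra).
  rewrite powr_mult, <- powr_gt0 by (auto; apply Rdiv_le_0_compat; lra).
  assert (B := powr_bernoulli (u / m) r Hr ltac:(apply Rdiv_le_0_compat; lra)).
  apply Rle_trans with (powr m r * (1 + r * (u / m - 1))).
  - right; field; lra.
  - apply Rmult_le_compat_l; [apply powr_ge0 | easy].
Qed.

Lemma powr_convex s t l r : 1 <= r -> 0 <= s -> 0 <= t -> 0 <= l <= 1 ->
  powr (l * s + (1 - l) * t) r <= l * powr s r + (1 - l) * powr t r.
Proof.
  intros Hr Hs Ht Hl; set (m := l * s + (1 - l) * t).
  destruct (Req_dec m 0) as [Hm|Hm].
  { rewrite Hm, powr_le0 by lra.
    assert (A := powr_ge0 s r); assert (B := powr_ge0 t r); nra. }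
  assert (Ts := powr_tangent s m r Hr Hs ltac:(unfold m in *; nra)).
  assert (Tt := powr_tangent t m r Hr Ht ltac:(unfold m in *; nra)).
  set (k := r * (powr m r / m)) in *.
  apply Rle_trans with (l * (powr m r + k * (s - m)) + (1 - l) * (powr m r + k * (t - m))).
  - right; unfold m; ring.
  - apply Rplus_le_compat; apply Rmult_le_compat_l; lra.
Qed.

Lemma abs_powr_convex r a b l : 1 <= r -> 0 <= l <= 1 ->
  powr (Rabs (l * a + (1 - l) * b)) r <= l * powr (Rabs a) r + (1 - l) * powr (Rabs b) r.
Proof.
  intros Hr Hl; eapply Rle_trans; [apply powr_le_compat with (b := l * Rabs a + (1 - l) * Rabs b)|].
  - lra.
  - eapply Rle_trans; [apply Rabs_triang|].
    rewrite !Rabs_mult, (Rabs_pos_eq l), (Rabs_pos_eq (1 - l)) by lra; lra.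
  - apply powr_convex; auto; apply Rabs_pos.
Qed.

Lemma abs_powr_sub_le r z w : 1 <= r ->
  powr (Rabs (z - w)) r <= Rpower 2 r * (powr (Rabs z) r + powr (Rabs w) r).
Proof.
  intros Hr; set (M := Rmax (Rabs z) (Rabs w)).
  assert (Hz : Rabs z <= M) by apply Rmax_l; assert (Hw : Rabs w <= M) by apply Rmax_r.
  assert (HM : 0 <= M) by (apply Rle_trans with (Rabs z); [apply Rabs_pos | easy]).
  apply Rle_trans with (powr (2 * M) r).
  - apply powr_le_compat; [lra|]. unfold Rminus.
    eapply Rle_trans; [apply Rabs_triang|]; rewrite Rabs_Ropp; lra.
  - rewrite powr_mult by lra.
    apply Rmult_le_compat_l; [left; apply exp_pos|].
    assert (A := powr_ge0 (Rabs z) r); assert (B := powr_ge0 (Rabs w) r).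
    unfold M, Rmax; destruct (Rle_dec (Rabs z) (Rabs w)); lra.
Qed.

(** * Finite sums *)

Lemma sumR_le n f g : (forall i, (i < n)%nat -> f i <= g i) -> sumR n f <= sumR n g.
Proof. induction n; simpl; intros; [lra|]. apply Rplus_le_compat; auto. Qed.

Lemma sumR_ext n f g : (forall i, (i < n)%nat -> f i = g i) -> sumR n f = sumR n g.
Proof. induction n; simpl; intros H; [easy|]. rewrite IHn, H by auto; easy. Qed.

Lemma sumR_ge0 n f : (forall i, (i < n)%nat -> 0 <= f i) -> 0 <= sumR n f.
Proof.
  intros H; apply Rle_trans with (sumR n (fun _ => 0)); [|apply sumR_le; auto].
  clear H; induction n; simpl; lra.
Qed.

Lemma sumR_prefix_le n f : (forall i, (i < n)%nat -> 0 <= f i) ->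
  forall i j, (i <= j <= n)%nat -> sumR i f <= sumR j f.
Proof.
  intros Hf i j [Hij Hjn]; induction Hij; [lra|].
  simpl; assert (0 <= f m) by (apply Hf; lia); assert (sumR i f <= sumR m f) by (apply IHHij; lia); lra.
Qed.

Lemma sumR_truncate n k f : (k <= n)%nat ->
  sumR n (fun j => if lt_dec j k then f j else 0) = sumR k f.
Proof.
  induction n; intros Hk.
  - replace k with 0%nat by lia; easy.
  - destruct (Nat.eq_dec k (S n)) as [->|Hne].
    + apply sumR_ext; intros j Hj; destruct (lt_dec j (S n)); [easy | lia].
    + simpl; rewrite IHn by lia; destruct (lt_dec n k); [lia | ring].
Qed.

Fixpoint running_max (f : nat -> R) (k : nat) : R :=
  match k with O => f O | S k' => Rmax (running_max f k') (f (S k')) end.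

Lemma running_max_ge f j k : (j <= k)%nat -> f j <= running_max f k.
Proof.
  induction k; intros Hj; [replace j with 0%nat by lia; simpl; lra|].
  destruct (Nat.eq_dec j (S k)) as [->|Hne]; [apply Rmax_r|].
  eapply Rle_trans; [apply IHk; lia | apply Rmax_l].
Qed.

Lemma running_max_lub f k c : (forall j, (j <= k)%nat -> f j <= c) -> running_max f k <= c.
Proof. induction k; intros H; simpl; [|apply Rmax_lub; [apply IHk; auto|]]; apply H; lia. Qed.

Lemma sumR_ge_term n f i : (forall j, (j < n)%nat -> 0 <= f j) -> (i < n)%nat -> f i <= sumR n f.
Proof.
  induction n; intros Hf Hi; [lia|]; simpl.
  assert (0 <= sumR n f) by (apply sumR_ge0; auto).
  destruct (Nat.eq_dec i n) as [->|]; [lra|].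
  assert (f i <= sumR n f) by (apply IHn; auto; lia); assert (0 <= f n) by auto; lra.
Qed.

(* Running maximum of [z], with [z] replaced outside [P] by a value below every [z i]. *)
Lemma monotone_extension n (P : nat -> Prop) (z : nat -> R) :
  (forall i j, (i <= j < n)%nat -> P i -> P j -> z i <= z j) ->
  exists x, in_Xi n x /\ forall i, (i < n)%nat -> P i -> x i = z i.
Proof.
  intros Hz; set (low := - sumR n (fun j => Rabs (z j))).
  assert (Hlow : forall j, (j < n)%nat -> low <= z j).
  { intros j Hj; assert (Rabs (z j) <= sumR n (fun j => Rabs (z j)))
      by (apply (sumR_ge_term n (fun j => Rabs (z j))); auto; intros; apply Rabs_pos).
    assert (A := Rle_abs (- z j)); rewrite Rabs_Ropp in A; unfold low; lra. }
  set (z' := fun j => if excluded_middle_informative (P j) then z j else low).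
  exists (running_max z'); split.
  - intros i j [Hij Hj]; apply running_max_lub; intros k Hk; apply running_max_ge; lia.
  - intros i Hi HPi; apply Rle_antisym.
    + apply running_max_lub; intros j Hj; unfold z'.
      destruct (excluded_middle_informative (P j)); [apply Hz|apply Hlow]; auto; lia.
    + replace (z i) with (z' i) by (unfold z'; destruct excluded_middle_informative; easy).
      apply running_max_ge; lia.
Qed.

Lemma exists_separation n (P : nat -> Prop) (x : nat -> R) y :
  (forall i, (i < n)%nat -> P i -> x i <> y) ->
  exists d, 0 < d /\ forall i, (i < n)%nat -> P i -> d <= Rabs (x i - y).
Proof.
  induction n; intros H; [exists 1; split; [lra | intros; lia]|].
  destruct IHn as [d [Hd Hsep]]; [intros; apply H; auto|].
  destruct (classic (P n)) as [HPn|HPn].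
  - assert (Hxn : 0 < Rabs (x n - y)) by (apply Rabs_pos_lt; intros E; apply (H n); auto; lra).
    exists (Rmin d (Rabs (x n - y))); split; [apply Rmin_pos; lra|].
    intros i Hi HPi; destruct (Nat.eq_dec i n) as [->|]; [apply Rmin_r|].
    eapply Rle_trans; [apply Rmin_l | apply Hsep; auto; lia].
  - exists d; split; auto; intros i Hi HPi.
    destruct (Nat.eq_dec i n) as [->|]; [easy | apply Hsep; auto; lia].
Qed.

(** * Riemann integrals of monotone functions *)

Fixpoint grid (k : nat) (x d : R) : list R :=
  match k with O => x :: nil | S k' => x :: grid k' (x + d) d end.

Fixpoint grid_values (h : R -> R) (k : nat) (x d : R) : list R :=
  match k with O => nil | S k' => h x :: grid_values h k' (x + d) d end.

Lemma grid_length k x d : length (grid k x d) = S k.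
Proof. revert x; induction k; intros; simpl; auto. Qed.

Lemma grid_values_length h k x d : length (grid_values h k x d) = k.
Proof. revert x; induction k; intros; simpl; auto. Qed.

Lemma grid_nth k x d i : (i <= k)%nat -> pos_Rl (grid k x d) i = x + INR i * d.
Proof.
  revert x i; induction k; intros x [|i] Hi; cbn [grid pos_Rl]; try (simpl; ring); [lia|].
  rewrite IHk, S_INR by lia; ring.
Qed.

Lemma grid_ordered k x d : 0 <= d -> ordered_Rlist (grid k x d).
Proof.
  intros Hd i Hi; rewrite grid_length in Hi; simpl in Hi.
  rewrite !grid_nth, S_INR by lia; nra.
Qed.

Lemma grid_first k x d : pos_Rl (grid k x d) 0 = x.
Proof. destruct k; easy. Qed.

Lemma grid_last k x d : pos_Rl (grid k x d) (pred (length (grid k x d))) = x + INR k * d.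
Proof. rewrite grid_length; apply grid_nth; lia. Qed.

Lemma grid_values_nth h k x d i : (i < k)%nat ->
  pos_Rl (grid_values h k x d) i = h (x + INR i * d).
Proof.
  revert x i; induction k; intros x [|i] Hi; cbn [grid_values pos_Rl]; try lia.
  - f_equal; simpl; ring.
  - rewrite IHk, S_INR by lia; f_equal; ring.
Qed.

Lemma grid_cell k x d t : 0 < d -> x <= t < x + INR k * d ->
  exists i, (i < k)%nat /\ x + INR i * d <= t < x + INR (S i) * d.
Proof.
  revert x; induction k; intros x Hd Ht; [simpl in Ht; lra|].
  destruct (Rlt_dec t (x + d)).
  - exists 0%nat; simpl; split; [lia | lra].
  - destruct (IHk (x + d)) as [i [Hi Hit]]; [easy | rewrite S_INR in Ht; lra|].
    exists (S i); rewrite !S_INR in *; split; [lia | lra].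
Qed.

Lemma Int_SF_grid_oscillation f b k x d : 0 <= d -> x + INR k * d <= b ->
  Int_SF (grid_values (fun y => f (Rmin (y + d) b) - f y) k x d) (grid k x d)
  = d * (f (x + INR k * d) - f x).
Proof.
  revert x; induction k; intros x Hd Hb; [simpl; replace (x + 0 * d) with x by ring; ring|].
  rewrite S_INR in Hb.
  assert (0 <= INR k * d) by (apply Rmult_le_pos; [apply pos_INR | lra]).
  assert (Hmin : Rmin (x + d) b = x + d) by (apply Rmin_left; lra).
  destruct k.
  - cbn; rewrite Hmin, Rmult_1_l; ring.
  - change (Int_SF (grid_values (fun y => f (Rmin (y + d) b) - f y) (S (S k)) x d)
              (grid (S (S k)) x d))
      with ((f (Rmin (x + d) b) - f x) * (x + d - x) +
            Int_SF (grid_values (fun y => f (Rmin (y + d) b) - f y) (S k) (x + d) d)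
              (grid (S k) (x + d) d)).
    rewrite IHk, Hmin, !S_INR by (rewrite ?S_INR in *; lra).
    replace (x + d + (INR k + 1) * d) with (x + (INR k + 1 + 1) * d) by ring; ring.
Qed.

Lemma grid_oscillation f a b k d t : 0 < d -> a + INR k * d = b ->
  (forall x y, a <= x -> x <= y -> y <= b -> f x <= f y) -> a <= t < b ->
  exists i, (i < k)%nat /\ a + INR i * d <= t < a + INR (S i) * d /\
  Rabs (f t - f (a + INR i * d)) <= f (Rmin (a + INR i * d + d) b) - f (a + INR i * d).
Proof.
  intros Hd Hend Hf Ht; destruct (grid_cell k a d t Hd ltac:(lra)) as [i [Hi Hit]].
  exists i; split; [easy | split; [easy|]].
  assert (INR (S i) <= INR k) by (apply le_INR; lia).
  assert (0 <= INR i * d) by (apply Rmult_le_pos; [apply pos_INR | lra]).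
  rewrite S_INR in *; rewrite Rmin_left by nra.
  assert (f (a + INR i * d) <= f t) by (apply Hf; nra).
  assert (f t <= f (a + INR i * d + d)) by (apply Hf; nra).
  rewrite Rabs_pos_eq; lra.
Qed.

(* On the uniform grid with [k] cells, [f] is approximated by its value at the
   left end of each cell, with error at most the oscillation of [f] on that
   cell; the total oscillation is [(b - a) (f b - f a) / k]. *)
Lemma Riemann_integrable_nondecreasing f a b : a <= b ->
  (forall x y, a <= x -> x <= y -> y <= b -> f x <= f y) -> Riemann_integrable f a b.
Proof.
  intros Hab Hf; destruct (Req_EM_T a b) as [<-|Hne]; [apply RiemannInt_P7|].
  intros eps; set (K := (b - a) * (f b - f a) + 1).
  assert (HK : 0 < K) by (assert (f a <= f b) by (apply Hf; lra); unfold K; nra).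
  destruct (constructive_indefinite_description _
              (archimed_cor1 (eps / K) ltac:(apply Rdiv_lt_0_compat; [apply cond_pos | lra])))
    as [k [Hk Hk0]].
  assert (Hkpos : 0 < INR k) by (apply lt_0_INR; lia).
  set (d := (b - a) / INR k).
  assert (Hd : 0 < d) by (apply Rdiv_lt_0_compat; lra).
  assert (Hend : a + INR k * d = b) by (unfold d; field; lra).
  set (l := grid k a d); set (h := fun y => f (Rmin (y + d) b) - f y).
  assert (Hlen : pred (length l) = k) by (unfold l; rewrite grid_length; easy).
  assert (Hl : forall i, (i <= k)%nat -> pos_Rl l i = a + INR i * d) by (intros; apply grid_nth; lia).
  assert (Hord : ordered_Rlist l) by (apply grid_ordered; lra).
  assert (H0 : pos_Rl l 0 = a) by apply grid_first.
  assert (Hk' : pos_Rl l (pred (length l)) = b) by (unfold l; rewrite grid_last; easy).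
  destruct (StepFun_P38 f Hord H0 Hk') as [phi [Hphib Hphi]].
  destruct (StepFun_P38 h Hord H0 Hk') as [psi [Hpsib Hpsi]].
  exists phi, psi; split.
  - intros t Ht; rewrite Rmin_left, Rmax_right in Ht by lra.
    destruct (Req_dec t b) as [->|Htb].
    { rewrite Hphib, Hpsib; unfold h; rewrite Rmin_right by lra.
      rewrite Rminus_diag, Rabs_R0; lra. }
    destruct (grid_oscillation f a b k d t Hd Hend Hf ltac:(lra)) as [i [Hi [Hit Hosc]]].
    assert (Hco : co_interval (pos_Rl l i) (pos_Rl l (S i)) t) by (rewrite !Hl by lia; red; lra).
    rewrite (Hphi i ltac:(lia) t Hco), (Hpsi i ltac:(lia) t Hco), Hl by lia; exact Hosc.
  - assert (Had : adapted_couple psi a b l (grid_values h k a d)).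
    { red; rewrite Rmin_left, Rmax_right by lra; repeat split; auto.
      - unfold l; rewrite grid_length, grid_values_length; easy.
      - intros i Hi x Hx; rewrite Hlen in Hi.
        rewrite (Hpsi i ltac:(lia) x) by (unfold co_interval, open_interval in *; lra).
        rewrite grid_values_nth, Hl by lia; easy. }
    unfold RiemannInt_SF; destruct (Rle_dec a b); [|lra].
    rewrite (StepFun_P17 (StepFun_P1 psi) Had); unfold h, l.
    rewrite Int_SF_grid_oscillation, Hend by lra.
    assert (f a <= f b) by (apply Hf; lra).
    rewrite Rabs_pos_eq by (apply Rmult_le_pos; lra).
    assert (Hinv : 0 < / INR k) by (apply Rinv_0_lt_compat; lra).
    apply Rle_lt_trans with (K * / INR k).
    + unfold d, K, Rdiv; nra.
    + apply Rlt_le_trans with (K * (eps / K)); [apply Rmult_lt_compat_l; lra | right; field; lra].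
Qed.

Lemma ex_RInt_nondecreasing f a b : a <= b ->
  (forall x y, a <= x -> x <= y -> y <= b -> f x <= f y) -> ex_RInt f a b.
Proof. intros; apply ex_RInt_Reals_1, Riemann_integrable_nondecreasing; auto. Qed.

Lemma ex_RInt_nonincreasing f a b : a <= b ->
  (forall x y, a <= x -> x <= y -> y <= b -> f y <= f x) -> ex_RInt f a b.
Proof.
  intros Hab Hf; apply (ex_RInt_ext (fun t => - - f t)); [intros; simpl; ring|].
  apply (ex_RInt_opp (fun t => - f t)), ex_RInt_nondecreasing; auto.
  intros; apply Ropp_le_contravar; auto.
Qed.

Lemma RInt_plus_R f g a b : ex_RInt f a b -> ex_RInt g a b ->
  RInt (fun t => f t + g t) a b = RInt f a b + RInt g a b.
Proof. exact (RInt_plus f g a b). Qed.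

Lemma RInt_scal_R k f a b : ex_RInt f a b -> RInt (fun t => k * f t) a b = k * RInt f a b.
Proof. exact (RInt_scal f a b k). Qed.

Lemma RInt_const_R c a b : RInt (fun _ => c) a b = c * (b - a).
Proof. rewrite RInt_const; unfold scal; simpl; unfold mult; simpl; ring. Qed.

Lemma RInt_le_superinterval f c u v d : c <= u -> u <= v -> v <= d ->
  ex_RInt f c u -> ex_RInt f u v -> ex_RInt f v d ->
  (forall t, c <= t <= d -> 0 <= f t) -> RInt f u v <= RInt f c d.
Proof.
  intros Hcu Huv Hvd Ecu Euv Evd Hf.
  rewrite <- (RInt_Chasles f c u d Ecu (ex_RInt_Chasles f u v d Euv Evd)).
  rewrite <- (RInt_Chasles f u v d Euv Evd).
  assert (0 <= RInt f c u) by (apply RInt_ge_0; auto; intros; apply Hf; lra).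
  assert (0 <= RInt f v d) by (apply RInt_ge_0; auto; intros; apply Hf; lra).
  simpl; unfold plus; simpl; lra.
Qed.

(** * Convex functions and closed hulls *)

Definition convex_fun (f : R -> R) : Prop :=
  forall a b l, 0 <= l <= 1 -> f (l * a + (1 - l) * b) <= l * f a + (1 - l) * f b.

Lemma convex_fun_opp f : convex_fun f -> convex_fun (fun x => f (- x)).
Proof. intros Hf a b l Hl; simpl; rewrite <- (Hf (- a) (- b) l Hl); right; f_equal; ring. Qed.

(* Upper bound from the chord over [z, z + 1], lower bound from the chord over
   [z - 1, z + h] (which passes above [z]). *)
Lemma convex_fun_lipschitz_right f z h : convex_fun f -> 0 <= h <= 1 ->
  Rabs (f (z + h) - f z) <= (Rabs (f (z + 1) - f z) + Rabs (f z - f (z - 1))) * h.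
Proof.
  intros Hf Hh.
  assert (Hup : f (z + h) <= h * f (z + 1) + (1 - h) * f z).
  { replace (z + h) with (h * (z + 1) + (1 - h) * z) by ring; apply Hf; lra. }
  assert (Hlow : f z <= / (1 + h) * f (z + h) + (1 - / (1 + h)) * f (z - 1)).
  { replace z with (/ (1 + h) * (z + h) + (1 - / (1 + h)) * (z - 1)) at 1 by (field; lra).
    apply Hf; split; [left; apply Rinv_0_lt_compat; lra|].
    rewrite <- Rinv_1; apply Rinv_le_contravar; lra. }
  assert (Hlow' : (1 + h) * f z <= f (z + h) + h * f (z - 1)).
  { apply Rmult_le_compat_l with (r := 1 + h) in Hlow; [|lra].
    replace ((1 + h) * (/ (1 + h) * f (z + h) + (1 - / (1 + h)) * f (z - 1)))
      with (f (z + h) + h * f (z - 1)) in Hlow by (field; lra).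
    easy. }
  assert (A := Rle_abs (f (z + 1) - f z)); assert (B := Rle_abs (- (f z - f (z - 1)))).
  rewrite Rabs_Ropp in B.
  assert (0 <= h * Rabs (f (z + 1) - f z)) by (apply Rmult_le_pos; [lra | apply Rabs_pos]).
  assert (0 <= h * Rabs (f z - f (z - 1))) by (apply Rmult_le_pos; [lra | apply Rabs_pos]).
  assert (h * (f (z + 1) - f z) <= h * Rabs (f (z + 1) - f z)) by (apply Rmult_le_compat_l; lra).
  assert (h * - (f z - f (z - 1)) <= h * Rabs (f z - f (z - 1))) by (apply Rmult_le_compat_l; lra).
  apply Rabs_le; split; nra.
Qed.

Lemma convex_fun_continuous f : convex_fun f -> forall z, continuity_pt f z.
Proof.
  intros Hf z; set (K := Rabs (f (z + 1) - f z) + Rabs (f z - f (z - 1)) + 1).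
  assert (HK : 0 < K) by (unfold K; assert (A := Rabs_pos (f (z + 1) - f z));
                                    assert (B := Rabs_pos (f z - f (z - 1))); lra).
  assert (Hlip : forall w, Rabs (w - z) <= 1 -> Rabs (f w - f z) <= K * Rabs (w - z)).
  { intros w Hw; destruct (Rle_dec z w).
    - rewrite (Rabs_pos_eq (w - z)) in Hw |- * by lra.
      replace w with (z + (w - z)) at 1 by ring.
      eapply Rle_trans; [apply convex_fun_lipschitz_right; auto; lra|].
      apply Rmult_le_compat_r; unfold K; lra.
    - rewrite (Rabs_left1 (w - z)) in Hw |- * by lra.
      assert (H := convex_fun_lipschitz_right _ (- z) (z - w) (convex_fun_opp f Hf) ltac:(lra)).
      simpl in H; rewrite !Ropp_involutive in H.
      replace (- z + (z - w)) with (- w) in H by ring; replace (- z + 1) with (- (z - 1)) in H by ring;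
      replace (- z - 1) with (- (z + 1)) in H by ring; rewrite !Ropp_involutive in H.
      rewrite (Rabs_minus_sym (f (z - 1)) (f z)), (Rabs_minus_sym (f z) (f (z + 1))) in H.
      rewrite Ropp_minus_distr; eapply Rle_trans; [apply H|]; apply Rmult_le_compat_r; unfold K; lra. }
  intros eps He; exists (Rmin 1 (eps / K)); split; [apply Rmin_pos; [lra | apply Rdiv_lt_0_compat; lra]|].
  intros w [_ Hw]; simpl in *; unfold R_dist in *.
  assert (Hw1 : Rmin 1 (eps / K) <= 1) by apply Rmin_l.
  assert (HwK : Rmin 1 (eps / K) <= eps / K) by apply Rmin_r.
  eapply Rle_lt_trans; [apply Hlip; lra|].
  apply Rlt_le_trans with (K * (eps / K)); [apply Rmult_lt_compat_l; lra | right; field; lra].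
Qed.

Lemma continuous_coercive_has_min f lo hi c : lo <= c <= hi ->
  (forall x, continuity_pt f x) -> (forall w, w < lo \/ hi < w -> f c < f w) ->
  exists xm, forall w, f xm <= f w.
Proof.
  intros Hc Hf Hfar.
  destruct (continuity_ab_min f lo hi ltac:(lra) (fun x _ => Hf x)) as [xm [Hmin Hxm]].
  exists xm; intros w; destruct (Rle_dec lo w), (Rle_dec w hi); try (apply Hmin; lra).
  all: assert (f xm <= f c) by (apply Hmin; lra); assert (f c < f w) by (apply Hfar; lra); lra.
Qed.

Definition in_hull_closure (S : R -> Prop) (x : R) : Prop :=
  (forall eps, 0 < eps -> exists s, S s /\ s < x + eps) /\
  (forall eps, 0 < eps -> exists s, S s /\ x - eps < s).

Lemma hull_projection_of_upper_bound (S : R -> Prop) s0 z : S s0 -> (forall s, S s -> s <= z) ->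
  exists x, in_hull_closure S x /\ forall s, S s -> Rabs (x - s) <= Rabs (z - s).
Proof.
  intros Hs0 Hz; destruct (completeness S) as [x [Hub Hleast]]; [now exists z | now exists s0|].
  exists x; split; [split|].
  - intros eps He; exists s0; split; [easy|]; assert (s0 <= x) by auto; lra.
  - intros eps He; apply NNPP; intros Hn; assert (x <= x - eps); [|lra].
    apply Hleast; intros s Hs; apply Rnot_lt_le; intros Hlt; apply Hn; now exists s.
  - intros s Hs; assert (s <= x) by auto; assert (x <= z) by (apply Hleast; auto).
    rewrite !Rabs_pos_eq by lra; lra.
Qed.

Lemma hull_projection (S : R -> Prop) s0 z : S s0 ->
  exists x, in_hull_closure S x /\ forall s, S s -> Rabs (x - s) <= Rabs (z - s).
Proof.
  intros Hs0.
  destruct (classic (forall s, S s -> s <= z)) as [Hup|Hup];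
    [now apply (hull_projection_of_upper_bound S s0)|].
  destruct (classic (forall s, S s -> z <= s)) as [Hlow|Hlow].
  - destruct (hull_projection_of_upper_bound (fun s => S (- s)) (- s0) (- z))
      as [x [[Hx1 Hx2] Hxz]]; [rewrite Ropp_involutive; easy | intros s Hs; apply Hlow in Hs; lra|].
    exists (- x); split; [split|].
    + intros eps He; destruct (Hx2 eps He) as [s [Hs Hlt]]; exists (- s); split; [easy | lra].
    + intros eps He; destruct (Hx1 eps He) as [s [Hs Hlt]]; exists (- s); split; [easy | lra].
    + intros s Hs; specialize (Hxz (- s) ltac:(rewrite Ropp_involutive; easy)).
      rewrite <- Rabs_Ropp, <- (Rabs_Ropp (z - s)); replace (- (- x - s)) with (x - - s) by ring;
        replace (- (z - s)) with (- z - - s) by ring; easy.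
  - apply not_all_ex_not in Hup as [s1 Hs1]; apply imply_to_and in Hs1 as [Hs1 Hs1z].
    apply not_all_ex_not in Hlow as [s2 Hs2]; apply imply_to_and in Hs2 as [Hs2 Hs2z].
    exists z; split; [split|].
    + intros eps He; exists s2; split; [easy | lra].
    + intros eps He; exists s1; split; [easy | lra].
    + intros; lra.
Qed.

Lemma exists_near_left_end a u d : 0 <= a <= u -> 0 < u -> 0 < d ->
  exists u', a <= u' <= u /\ 0 < u' /\ u' - a <= d.
Proof.
  intros Ha Hu Hd; destruct (Rlt_dec 0 a).
  - exists a; lra.
  - exists (Rmin u d); assert (Rmin u d <= u) by apply Rmin_l; assert (Rmin u d <= d) by apply Rmin_r.
    assert (0 < Rmin u d) by (apply Rmin_pos; lra); lra.
Qed.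

Lemma exists_near_right_end b v d : v <= b <= 1 -> v < 1 -> 0 < d ->
  exists v', v <= v' <= b /\ v' < 1 /\ b - v' <= d.
Proof.
  intros Hb Hv Hd; destruct (Rlt_dec b 1).
  - exists b; lra.
  - exists (Rmax v (1 - d / 2)); assert (v <= Rmax v (1 - d / 2)) by apply Rmax_l.
    assert (1 - d / 2 <= Rmax v (1 - d / 2)) by apply Rmax_r.
    assert (Rmax v (1 - d / 2) < 1) by (apply Rmax_lub_lt; lra); lra.
Qed.

(** * Quantiles and supports *)

Section Quantile.

Variable F : R -> R.
Hypothesis HF : is_cdf F.

Lemma quantile_is_lub t : 0 < t < 1 -> is_lub (fun x => F x <= t) (quantile F t).
Proof.
  destruct HF as [_ [_ [Hlo Hhi]]]; intros Ht; unfold quantile; apply epsilon_spec.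
  destruct (Hhi (1 - t) ltac:(lra)) as [M HM]; destruct (Hlo t ltac:(lra)) as [M' HM'].
  destruct (completeness (fun x => F x <= t)) as [l Hl]; [| |now exists l].
  - exists M; intros x Hx; apply Rnot_lt_le; intros HMx.
    specialize (HM x ltac:(lra)); apply Rabs_def2 in HM; lra.
  - exists M'; specialize (HM' M' (Rle_refl _)); apply Rabs_def2 in HM'; lra.
Qed.

Lemma quantile_le s t : 0 < s -> s <= t -> t < 1 -> quantile F s <= quantile F t.
Proof.
  intros Hs Hst Ht.
  destruct (quantile_is_lub s ltac:(lra)) as [_ Hleast].
  destruct (quantile_is_lub t ltac:(lra)) as [Hub _].
  apply Hleast; intros x Hx; apply Hub; lra.
Qed.

Lemma quantile_supp t : 0 < t < 1 -> supp F (quantile F t).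
Proof.
  intros Ht eps He; destruct (quantile_is_lub t Ht) as [Hub Hleast].
  set (q := quantile F t) in *; destruct HF as [Hmono _].
  assert (Hbelow : F (q - eps) <= t).
  { apply NNPP; intros Hn; assert (q <= q - eps) by (apply Hleast; intros x Hx;
      apply Rnot_lt_le; intros Hlt; apply Hn, Rle_trans with (F x); [apply Hmono|]; lra).
    lra. }
  assert (Habove : t < F (q + eps)).
  { apply Rnot_le_lt; intros Hle; assert (q + eps <= q) by (apply Hub; lra); lra. }
  lra.
Qed.

Lemma supp_closed x :
  (forall eps, 0 < eps -> exists w, supp F w /\ Rabs (w - x) < eps) -> supp F x.
Proof.
  destruct HF as [Hmono _]; intros H eps He; destruct (H (eps / 2) ltac:(lra)) as [w [Hw Hwx]].
  specialize (Hw (eps / 2) ltac:(lra)); apply Rabs_def2 in Hwx.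
  assert (F (x - eps) <= F (w - eps / 2)) by (apply Hmono; lra).
  assert (F (w + eps / 2) <= F (x + eps)) by (apply Hmono; lra).
  lra.
Qed.

End Quantile.

Lemma quantile_discrete_cdf n p y k t : in_Pi n p -> in_Xi n y -> (k < n)%nat ->
  sumR k p <= t < sumR (S k) p -> quantile (discrete_cdf n p y) t = y k.
Proof.
  intros [Hp _] Hy Hk Ht.
  assert (L : is_lub (fun x => discrete_cdf n p y x <= t) (y k)).
  { split.
    - intros x Hx; apply Rnot_lt_le; intros Hlt.
      assert (sumR (S k) p <= discrete_cdf n p y x); [|lra].
      unfold discrete_cdf; rewrite <- (sumR_truncate n (S k) p) by lia.
      apply sumR_le; intros i Hi; destruct (lt_dec i (S k)), (Rle_dec (y i) x); auto; try lra.
      assert (y i <= y k) by (apply Hy; lia); lra.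
    - intros b Hb; apply Rnot_lt_le; intros Hlt.
      assert ((b + y k) / 2 <= b); [|lra].
      apply Hb, Rle_trans with (sumR k p); [|lra].
      unfold discrete_cdf; rewrite <- (sumR_truncate n k p) by lia.
      apply sumR_le; intros i Hi; destruct (lt_dec i k), (Rle_dec (y i) ((b + y k) / 2));
        auto; try lra.
      assert (y k <= y i) by (apply Hy; lia); lra. }
  apply (is_lub_u _ _ _ (epsilon_spec (inhabits 0) _ (ex_intro _ _ L)) L).
Qed.

Lemma supp_discrete_cdf n p x y : in_Pi n p -> supp (discrete_cdf n p x) y ->
  exists i, (i < n)%nat /\ 0 < p i /\ x i = y.
Proof.
  intros [Hp _] Hs; apply NNPP; intros Hn.
  destruct (exists_separation n (fun i => 0 < p i) x y) as [d [Hd Hsep]].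
  { intros i Hi Hpi E; apply Hn; exists i; auto. }
  specialize (Hs (d / 2) ltac:(lra)).
  assert (discrete_cdf n p x (y - d / 2) = discrete_cdf n p x (y + d / 2)); [|lra].
  apply sumR_ext; intros i Hi; destruct (Rlt_dec 0 (p i)) as [Hpi|Hpi].
  - specialize (Hsep i Hi Hpi).
    destruct (Rle_dec (x i) y); [rewrite Rabs_left1 in Hsep | rewrite Rabs_pos_eq in Hsep]; try lra;
      destruct (Rle_dec (x i) (y - d / 2)), (Rle_dec (x i) (y + d / 2)); lra.
  - assert (p i = 0) by (assert (0 <= p i) by auto; lra).
    destruct (Rle_dec (x i) (y - d / 2)), (Rle_dec (x i) (y + d / 2)); lra.
Qed.

(** * Cell costs *)

Section Loss.

Variables (r : R) (F : R -> R).
Hypotheses (Hr : 1 <= r) (HF : is_cdf F).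

Definition loss (z t : R) : R := powr (Rabs (z - quantile F t)) r.

Lemma loss_ge0 z t : 0 <= loss z t.
Proof. apply powr_ge0. Qed.

(* [loss z] is the sum of a nonincreasing and a nondecreasing function of [t]. *)
Lemma ex_RInt_loss z u v : 0 < u -> u <= v -> v < 1 -> ex_RInt (loss z) u v.
Proof.
  intros Hu Huv Hv.
  apply (ex_RInt_ext (fun t => powr (Rmax (z - quantile F t) 0) r
                               + powr (Rmax (quantile F t - z) 0) r)).
  { intros t _; unfold loss, Rmax.
    destruct (Rle_dec (z - quantile F t) 0), (Rle_dec (quantile F t - z) 0);
      rewrite ?(powr_le0 0) by lra.
    - replace (z - quantile F t) with 0 by lra; rewrite Rabs_R0, powr_le0; lra.
    - rewrite Rabs_left1 by lra; rewrite Ropp_minus_distr; lra.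
    - rewrite Rabs_pos_eq by lra; lra.
    - lra. }
  apply (ex_RInt_plus (fun t => powr (Rmax (z - quantile F t) 0) r)
                      (fun t => powr (Rmax (quantile F t - z) 0) r)).
  - apply ex_RInt_nonincreasing; auto; intros x y Hx Hxy Hy.
    assert (quantile F x <= quantile F y) by (apply quantile_le; auto; lra).
    apply powr_le_compat; [lra|]; apply Rle_max_compat_r; lra.
  - apply ex_RInt_nondecreasing; auto; intros x y Hx Hxy Hy.
    assert (quantile F x <= quantile F y) by (apply quantile_le; auto; lra).
    apply powr_le_compat; [lra|]; apply Rle_max_compat_r; lra.
Qed.

Lemma RInt_loss_le_superinterval z c u v d : 0 < c -> c <= u -> u <= v -> v <= d -> d < 1 ->
  RInt (loss z) u v <= RInt (loss z) c d.
Proof.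
  intros; apply RInt_le_superinterval; auto; try (apply ex_RInt_loss; lra).
  intros; apply loss_ge0.
Qed.

Lemma RInt_loss_ge0 z u v : 0 < u -> u <= v -> v < 1 -> 0 <= RInt (loss z) u v.
Proof. intros; apply RInt_ge_0; auto; [apply ex_RInt_loss; auto | intros; apply loss_ge0]. Qed.

Lemma RInt_loss_le_moment z M u v :
  int01 (fun t => powr (Rabs (quantile F t)) r) M -> 0 < u -> u <= v -> v < 1 ->
  RInt (loss z) u v <= Rpower 2 r * (powr (Rabs z) r + M).
Proof.
  intros [HM _] Hu Huv Hv.
  set (m := fun t => powr (Rabs (quantile F t)) r).
  assert (Em : ex_RInt m u v).
  { apply (ex_RInt_ext (loss 0)); [|apply ex_RInt_loss; auto].
    intros; unfold loss, m; rewrite Rminus_0_l, Rabs_Ropp; easy. }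
  assert (Hm : RInt m u v <= M).
  { apply HM; exists u, v, (ex_RInt_Reals_0 _ _ _ Em); repeat split; auto.
    rewrite (RInt_Reals m u v (ex_RInt_Reals_0 _ _ _ Em)); easy. }
  assert (Hm0 : 0 <= RInt m u v) by (apply RInt_ge_0; auto; intros; apply powr_ge0).
  assert (H2 : 0 < Rpower 2 r) by apply exp_pos.
  assert (Hz : 0 <= powr (Rabs z) r) by apply powr_ge0.
  apply Rle_trans with (RInt (fun t => Rpower 2 r * (powr (Rabs z) r + m t)) u v).
  - apply RInt_le; auto; [apply ex_RInt_loss; auto| |].
    + apply (ex_RInt_scal (fun t => powr (Rabs z) r + m t)),
            (ex_RInt_plus (fun _ => powr (Rabs z) r) m); auto; apply ex_RInt_const.
    + intros t _; apply abs_powr_sub_le; auto.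
  - assert (Ec := ex_RInt_const u v (powr (Rabs z) r)).
    rewrite RInt_scal_R, RInt_plus_R, RInt_const_R by (auto; apply (ex_RInt_plus _ m); auto).
    apply Rmult_le_compat_l; [lra|]; simpl; nra.
Qed.

Definition sign_at (m t : R) : R := if Rlt_dec t m then 1 else -1.

Lemma RInt_sign_at m u v : u <= m <= v ->
  ex_RInt (sign_at m) u v /\ RInt (sign_at m) u v = (m - u) - (v - m).
Proof.
  intros Hm.
  assert (E1 : forall t, Rmin u m < t < Rmax u m -> (fun _ => 1) t = sign_at m t).
  { intros t Ht; rewrite Rmin_left, Rmax_right in Ht by lra; unfold sign_at.
    destruct (Rlt_dec t m); lra. }
  assert (E2 : forall t, Rmin m v < t < Rmax m v -> (fun _ => -1) t = sign_at m t).
  { intros t Ht; rewrite Rmin_left, Rmax_right in Ht by lra; unfold sign_at.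
    destruct (Rlt_dec t m); lra. }
  assert (X1 : ex_RInt (sign_at m) u m) by (apply (ex_RInt_ext _ _ _ _ E1), ex_RInt_const).
  assert (X2 : ex_RInt (sign_at m) m v) by (apply (ex_RInt_ext _ _ _ _ E2), ex_RInt_const).
  split; [apply (ex_RInt_Chasles _ _ _ _ X1 X2)|].
  rewrite <- (RInt_Chasles _ _ _ _ X1 X2), <- (RInt_ext _ _ _ _ E1), <- (RInt_ext _ _ _ _ E2).
  rewrite !RInt_const_R; simpl; unfold plus; simpl; ring.
Qed.

(* For [r = 1], [|z - q t| >= |x - q t| + (z - x) sign (m - t)] when [x = q m]. *)
Lemma RInt_loss_median_le m z u v : r = 1 -> 0 < u -> u <= m <= v -> v < 1 ->
  RInt (loss (quantile F m)) u v
  <= RInt (loss z) u v + Rabs (z - quantile F m) * Rabs ((m - u) - (v - m)).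
Proof.
  intros Hr1 Hu Hm Hv; set (x := quantile F m).
  destruct (RInt_sign_at m u v Hm) as [Es Is].
  assert (Ex : ex_RInt (loss x) u v) by (apply ex_RInt_loss; lra).
  assert (Ez : ex_RInt (loss z) u v) by (apply ex_RInt_loss; lra).
  assert (Hle : RInt (fun t => loss x t + (z - x) * sign_at m t) u v <= RInt (loss z) u v).
  { apply RInt_le; auto; [lra | apply (ex_RInt_plus (loss x) (fun t => (z - x) * sign_at m t));
                                auto; apply (ex_RInt_scal (sign_at m)); auto|].
    intros t Ht; unfold loss; rewrite Hr1, !powr_1 by apply Rabs_pos; unfold sign_at.
    destruct (Rlt_dec t m).
    - assert (quantile F t <= x) by (apply quantile_le; auto; lra).
      rewrite (Rabs_pos_eq (x - _)) by lra; assert (A := Rle_abs (z - quantile F t)); lra.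
    - assert (x <= quantile F t) by (apply quantile_le; auto; lra).
      rewrite (Rabs_left1 (x - _)) by lra; assert (A := Rle_abs (- (z - quantile F t))).
      rewrite Rabs_Ropp in A; lra. }
  rewrite RInt_plus_R, RInt_scal_R, Is in Hle by (auto; apply (ex_RInt_scal (sign_at m)); auto).
  assert (A := Rle_abs (- ((z - x) * ((m - u) - (v - m))))).
  rewrite Rabs_Ropp, Rabs_mult in A; lra.
Qed.

Section Cell.

Hypothesis HM : finite_moment r F.
Variables (n : nat) (p : nat -> R) (i : nat).
Hypotheses (Hp : in_Pi n p) (Hi : (i < n)%nat) (Hpi : 0 < p i).

Definition in_cell (u v : R) : Prop :=
  sumR i p <= u /\ u <= v /\ v <= sumR (S i) p /\ 0 < u /\ v < 1.

Definition cell_integrals (z s : R) : Prop :=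
  exists u v, in_cell u v /\ s = RInt (loss z) u v.

(* [int_(P_i)^(P_(i+1)) |z - q t|^r dt] with [P_i = sumR i p], as a supremum over
   compact subintervals of ]0,1[ as in [int01]. *)
Definition cell_cost (z : R) : R := epsilon (inhabits 0) (is_lub (cell_integrals z)).

Lemma cell_bounds : 0 <= sumR i p /\ sumR (S i) p <= 1 /\ sumR i p < sumR (S i) p.
Proof.
  destruct Hp as [Hp0 Hp1]; split; [|split].
  - apply sumR_ge0; intros; apply Hp0; lia.
  - rewrite <- Hp1; apply (sumR_prefix_le n); auto; lia.
  - simpl; lra.
Qed.

Lemma in_cell_midpoint : in_cell ((sumR i p + sumR (S i) p) / 2) ((sumR i p + sumR (S i) p) / 2).
Proof. destruct cell_bounds as [H0 [H1 H2]]; red; lra. Qed.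

Lemma cell_cost_is_lub z : is_lub (cell_integrals z) (cell_cost z).
Proof.
  destruct HM as [M HMF]; unfold cell_cost; apply epsilon_spec.
  destruct (completeness (cell_integrals z)) as [c Hc]; [| |now exists c].
  - exists (Rpower 2 r * (powr (Rabs z) r + M)); intros s [u [v [[? [? [? [? ?]]]] ->]]].
    apply RInt_loss_le_moment; auto.
  - set (m := (sumR i p + sumR (S i) p) / 2).
    exists (RInt (loss z) m m), m, m; split; [apply in_cell_midpoint | easy].
Qed.

Lemma RInt_loss_le_cell_cost z u v : in_cell u v -> RInt (loss z) u v <= cell_cost z.
Proof. intros; apply (cell_cost_is_lub z); now exists u, v. Qed.

Lemma cell_cost_ge0 z : 0 <= cell_cost z.
Proof.
  set (m := (sumR i p + sumR (S i) p) / 2).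
  replace 0 with (RInt (loss z) m m) by apply (RInt_point (V := R_CompleteNormedModule)).
  apply RInt_loss_le_cell_cost, in_cell_midpoint.
Qed.

Lemma cell_cost_approx z eps : 0 < eps ->
  exists u v, in_cell u v /\ cell_cost z - eps < RInt (loss z) u v.
Proof.
  intros He; destruct (cell_cost_is_lub z) as [_ Hleast]; apply NNPP; intros Hn.
  assert (cell_cost z <= cell_cost z - eps); [|lra].
  apply Hleast; intros s [u [v [Huv ->]]]; apply Rnot_lt_le; intros Hlt; apply Hn; now exists u, v.
Qed.

Lemma cell_cost_le_compat x z :
  (forall t, sumR i p <= t <= sumR (S i) p -> 0 < t < 1 -> loss x t <= loss z t) ->
  cell_cost x <= cell_cost z.
Proof.
  intros Hxz; apply (cell_cost_is_lub x); intros s [u [v [Huv ->]]].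
  pose proof Huv as [? [? [? [? ?]]]].
  apply Rle_trans with (RInt (loss z) u v); [|apply RInt_loss_le_cell_cost; auto].
  apply RInt_le; auto; try (apply ex_RInt_loss; lra); intros t Ht; apply Hxz; lra.
Qed.

Lemma cell_cost_convex : convex_fun cell_cost.
Proof.
  intros a b l Hl; apply (cell_cost_is_lub (l * a + (1 - l) * b)).
  intros s [u [v [Huv ->]]].
  pose proof Huv as [? [? [? [? ?]]]].
  assert (Ea : ex_RInt (loss a) u v) by (apply ex_RInt_loss; lra).
  assert (Eb : ex_RInt (loss b) u v) by (apply ex_RInt_loss; lra).
  apply Rle_trans with (RInt (fun t => l * loss a t + (1 - l) * loss b t) u v).
  - apply RInt_le; [lra | apply ex_RInt_loss; lra | |].
    + apply (ex_RInt_plus (fun t => l * loss a t) (fun t => (1 - l) * loss b t));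
        [apply (ex_RInt_scal (loss a)) | apply (ex_RInt_scal (loss b))]; easy.
    + intros t _; unfold loss.
      replace (l * a + (1 - l) * b - quantile F t)
        with (l * (a - quantile F t) + (1 - l) * (b - quantile F t)) by ring.
      apply abs_powr_convex; easy.
  - rewrite RInt_plus_R;
      [|apply (ex_RInt_scal (loss a)); easy | apply (ex_RInt_scal (loss b)); easy].
    rewrite (RInt_scal_R l (loss a)), (RInt_scal_R (1 - l) (loss b)) by easy.
    assert (RInt (loss a) u v <= cell_cost a) by (apply RInt_loss_le_cell_cost; auto).
    assert (RInt (loss b) u v <= cell_cost b) by (apply RInt_loss_le_cell_cost; auto).
    apply Rplus_le_compat; apply Rmult_le_compat_l; lra.
Qed.

(* On the central half [u0, v0] of the cell the quantiles lie in [[q u0, q v0]];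
   an atom at distance at least [R0 >= 1] from this range pays at least
   [R0 (v0 - u0) >= cell_cost (q u0) + 1]. *)
Lemma cell_cost_coercive : exists lo hi c, lo <= c <= hi /\
  forall w, w < lo \/ hi < w -> cell_cost c < cell_cost w.
Proof.
  destruct cell_bounds as [C0 [C1 C2]].
  set (u0 := (3 * sumR i p + sumR (S i) p) / 4); set (v0 := (sumR i p + 3 * sumR (S i) p) / 4).
  assert (Hcell : in_cell u0 v0) by (unfold in_cell, u0, v0; lra).
  pose proof Hcell as [U1 [U2 [U3 [U4 U5]]]].
  set (Qa := quantile F u0); set (Qb := quantile F v0).
  assert (HQ : Qa <= Qb) by (apply quantile_le; auto).
  set (R0 := Rmax 1 ((cell_cost Qa + 1) / (v0 - u0))).
  assert (HR1 : 1 <= R0) by apply Rmax_l.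
  assert (HR2 : (cell_cost Qa + 1) / (v0 - u0) <= R0) by apply Rmax_r.
  assert (Hvu : 0 < v0 - u0) by (unfold u0, v0; lra).
  exists (Qa - R0), (Qb + R0), Qa; split; [lra|]; intros w Hw.
  apply Rlt_le_trans with (RInt (loss w) u0 v0); [|apply RInt_loss_le_cell_cost; auto].
  apply Rlt_le_trans with (RInt (fun _ => R0) u0 v0).
  - rewrite RInt_const_R.
    apply Rmult_le_compat_r with (r := v0 - u0) in HR2; [|lra].
    replace ((cell_cost Qa + 1) / (v0 - u0) * (v0 - u0)) with (cell_cost Qa + 1) in HR2
      by (field; lra).
    lra.
  - apply RInt_le; [lra | apply ex_RInt_const | apply ex_RInt_loss; lra|].
    intros t Ht; unfold loss.
    assert (Qa <= quantile F t) by (apply quantile_le; auto; lra).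
    assert (quantile F t <= Qb) by (apply quantile_le; auto; lra).
    apply Rle_trans with (powr R0 r); [apply powr_ge_id; auto|].
    apply powr_le_compat; [lra|]; destruct Hw.
    + rewrite Rabs_left1 by lra; lra.
    + rewrite Rabs_pos_eq by lra; lra.
Qed.

Lemma cell_cost_has_min : exists zm, forall w, cell_cost zm <= cell_cost w.
Proof.
  destruct cell_cost_coercive as [lo [hi [c [Hc Hfar]]]].
  apply (continuous_coercive_has_min cell_cost lo hi c Hc); auto.
  apply convex_fun_continuous, cell_cost_convex.
Qed.

(* The first two conditions make the atoms of different cells ordered. *)
Definition admissible_atom (x : R) : Prop :=
  (forall s, 0 < s < 1 -> s <= sumR i p -> quantile F s <= x) /\
  (forall s, 0 < s < 1 -> sumR (S i) p <= s -> x <= quantile F s) /\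
  supp F x /\ forall z, cell_cost x <= cell_cost z.

(* Enlarge [[u, v]] to [[u', v']] nearly filling the cell, so that [m] is almost
   its midpoint and the error term of [RInt_loss_median_le] is small. *)
Lemma admissible_atom_median : r = 1 -> admissible_atom (quantile F ((sumR i p + sumR (S i) p) / 2)).
Proof.
  intros Hr1; destruct cell_bounds as [C0 [C1 C2]].
  set (m := (sumR i p + sumR (S i) p) / 2); set (x := quantile F m).
  split; [|split; [|split]].
  - intros s Hs Hsi; apply quantile_le; auto; unfold m; lra.
  - intros s Hs Hsi; apply quantile_le; auto; unfold m; lra.
  - apply quantile_supp; auto; unfold m; lra.
  - intros z; apply (cell_cost_is_lub x); intros s [u [v [[U1 [U2 [U3 [U4 U5]]]] ->]]].
    apply Rle_plus_epsilon; intros eps He.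
    set (d := eps / (2 * Rabs (z - x) + 1)).
    assert (Hd : 0 < d) by (unfold d; apply Rdiv_lt_0_compat; [|assert (A := Rabs_pos (z - x))]; lra).
    destruct (exists_near_left_end (sumR i p) (Rmin u m) d) as [u' [Hu'1 [Hu'2 Hu'3]]];
      [split; [|apply Rmin_glb]; unfold m; lra | apply Rmin_glb_lt; unfold m; lra | easy|].
    destruct (exists_near_right_end (sumR (S i) p) (Rmax v m) d) as [v' [Hv'1 [Hv'2 Hv'3]]];
      [split; [apply Rmax_lub|]; unfold m; lra | apply Rmax_lub_lt; unfold m; lra | easy|].
    assert (Hmu := Rmin_r u m); assert (Hum := Rmin_l u m).
    assert (Hmv := Rmax_r v m); assert (Hvm := Rmax_l v m).
    apply Rle_trans with (RInt (loss x) u' v'); [apply RInt_loss_le_superinterval; lra|].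
    eapply Rle_trans; [apply (RInt_loss_median_le m z); auto; lra|]; fold x.
    assert (RInt (loss z) u' v' <= cell_cost z) by (apply RInt_loss_le_cell_cost; red; lra).
    assert (Rabs ((m - u') - (v' - m)) <= 2 * d) by (apply Rabs_le; unfold m in *; lra).
    assert (Rabs (z - x) * Rabs ((m - u') - (v' - m)) <= eps); [|lra].
    apply Rle_trans with (Rabs (z - x) * (2 * d)); [apply Rmult_le_compat_l; auto; apply Rabs_pos|].
    unfold d; assert (A := Rabs_pos (z - x)).
    apply Rmult_le_reg_r with (2 * Rabs (z - x) + 1); [lra|].
    field_simplify; [nra | lra].
Qed.

(* Project a minimiser of [cell_cost] onto the closed hull of the quantiles of
   the cell: this does not increase the cost, and the hull lies in [supp F]
   because the latter is a closed interval containing every quantile. *)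
Lemma admissible_atom_connected : connected_set (supp F) -> exists x, admissible_atom x.
Proof.
  intros Hconn; destruct cell_bounds as [C0 [C1 C2]].
  destruct cell_cost_has_min as [zm Hzm].
  set (in_range := fun t => sumR i p <= t <= sumR (S i) p /\ 0 < t < 1).
  set (values := fun y => exists t, in_range t /\ y = quantile F t).
  set (m := (sumR i p + sumR (S i) p) / 2).
  destruct (hull_projection values (quantile F m) zm) as [x [[Hbelow Habove] Hnear]].
  { exists m; split; [unfold in_range, m; lra | easy]. }
  exists x; split; [|split; [|split]].
  - intros s Hs Hsi; apply Rle_plus_epsilon; intros eps He.
    destruct (Hbelow eps He) as [y [[t [Ht ->]] Hty]].
    assert (quantile F s <= quantile F t) by (apply quantile_le; auto; red in Ht; lra); lra.
  - intros s Hs Hsi; apply Rle_plus_epsilon; intros eps He.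
    destruct (Habove eps He) as [y [[t [Ht ->]] Hty]].
    assert (quantile F t <= quantile F s) by (apply quantile_le; auto; red in Ht; lra); lra.
  - apply supp_closed; auto; intros eps He.
    destruct (Hbelow eps He) as [y1 [[t1 [Ht1 ->]] H1]].
    destruct (Habove eps He) as [y2 [[t2 [Ht2 ->]] H2]].
    assert (S1 : supp F (quantile F t1)) by (apply quantile_supp; auto; apply Ht1).
    assert (S2 : supp F (quantile F t2)) by (apply quantile_supp; auto; apply Ht2).
    destruct (Rlt_dec x (quantile F t1)); [exists (quantile F t1); split; [easy | apply Rabs_def1; lra]|].
    destruct (Rlt_dec (quantile F t2) x); [exists (quantile F t2); split; [easy | apply Rabs_def1; lra]|].
    exists x; split; [apply (Hconn (quantile F t1) (quantile F t2)); auto; lra|].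
    rewrite Rminus_diag, Rabs_R0; easy.
  - intros z; apply Rle_trans with (cell_cost zm); [|apply Hzm].
    apply cell_cost_le_compat; intros t Ht1 Ht2; apply powr_le_compat; [lra|].
    apply Hnear; exists t; split; [split|]; easy.
Qed.

End Cell.

(** * The cost of a discrete measure *)

Section Discrete.

Hypothesis HM : finite_moment r F.
Variables (n : nat) (p : nat -> R).
Hypothesis Hp : in_Pi n p.

Definition clamped_sum (a b : R) (k : nat) : R := Rmax a (Rmin (sumR k p) b).

Lemma clamped_sum_range a b k : a <= b -> a <= clamped_sum a b k <= b.
Proof. intros; unfold clamped_sum, Rmax, Rmin; repeat destruct Rle_dec; lra. Qed.

Lemma sumR_le_succ k : (k < n)%nat -> sumR k p <= sumR (S k) p.
Proof. intros; simpl; assert (0 <= p k) by (apply Hp; easy); lra. Qed.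

Lemma clamped_sum_le_succ a b k : (k < n)%nat -> clamped_sum a b k <= clamped_sum a b (S k).
Proof.
  intros Hk; assert (H := sumR_le_succ k Hk).
  unfold clamped_sum, Rmax, Rmin; repeat destruct Rle_dec; lra.
Qed.

Lemma clamped_sum_0 a b : 0 < a -> clamped_sum a b 0 = a.
Proof. intros; unfold clamped_sum, Rmax, Rmin; simpl; repeat destruct Rle_dec; lra. Qed.

Lemma clamped_sum_n a b : a <= b -> b < 1 -> clamped_sum a b n = b.
Proof. intros; unfold clamped_sum; rewrite (proj2 Hp); unfold Rmax, Rmin; repeat destruct Rle_dec; lra. Qed.

Lemma clamped_sum_between a b k t : a <= b ->
  clamped_sum a b k < t < clamped_sum a b (S k) -> sumR k p < t < sumR (S k) p.
Proof. intros; unfold clamped_sum, Rmax, Rmin in *; repeat destruct Rle_dec; lra. Qed.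

Lemma clamped_sum_in_cell a b k : a <= b -> clamped_sum a b k < clamped_sum a b (S k) ->
  sumR k p <= clamped_sum a b k /\ clamped_sum a b (S k) <= sumR (S k) p.
Proof. intros; unfold clamped_sum, Rmax, Rmin in *; repeat destruct Rle_dec; lra. Qed.

Lemma clamped_sum_around a b u v k : a <= u -> v <= b ->
  sumR k p <= u -> u <= v -> v <= sumR (S k) p ->
  clamped_sum a b k <= u /\ v <= clamped_sum a b (S k).
Proof. intros; unfold clamped_sum, Rmax, Rmin; repeat destruct Rle_dec; lra. Qed.

Definition quantile_gap (y : nat -> R) (t : R) : R :=
  powr (Rabs (quantile (discrete_cdf n p y) t - quantile F t)) r.

(* On the [k]-th cell the quantile of [delta^p_y] is the constant [y k]. *)
Lemma RInt_quantile_gap_split y a b : in_Xi n y -> 0 < a -> a <= b -> b < 1 ->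
  forall k, (k <= n)%nat ->
  ex_RInt (quantile_gap y) a (clamped_sum a b k) /\
  RInt (quantile_gap y) a (clamped_sum a b k) =
  sumR k (fun j => RInt (loss (y j)) (clamped_sum a b j) (clamped_sum a b (S j))).
Proof.
  intros Hy Ha Hab Hb; induction k as [|k IHk]; intros Hk.
  { rewrite clamped_sum_0 by easy; split; [apply ex_RInt_point | apply (RInt_point (V := R_CompleteNormedModule))]. }
  destruct IHk as [E1 I1]; [lia|].
  assert (Hm := clamped_sum_le_succ a b k ltac:(lia)).
  assert (R1 := clamped_sum_range a b k Hab); assert (R2 := clamped_sum_range a b (S k) Hab).
  assert (Eq : forall t, Rmin (clamped_sum a b k) (clamped_sum a b (S k)) < t
                         < Rmax (clamped_sum a b k) (clamped_sum a b (S k)) ->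
                loss (y k) t = quantile_gap y t).
  { intros t Ht; rewrite Rmin_left, Rmax_right in Ht by easy.
    assert (Hc := clamped_sum_between a b k t Hab Ht).
    unfold loss, quantile_gap; rewrite (quantile_discrete_cdf n p y k t); auto; lra. }
  assert (E2 : ex_RInt (quantile_gap y) (clamped_sum a b k) (clamped_sum a b (S k)))
    by (apply (ex_RInt_ext _ _ _ _ Eq), ex_RInt_loss; lra).
  split; [apply (ex_RInt_Chasles _ _ _ _ E1 E2)|].
  rewrite <- (RInt_Chasles _ _ _ _ E1 E2), I1, <- (RInt_ext _ _ _ _ Eq); reflexivity.
Qed.

Lemma RInt_quantile_gap_sum y a b : in_Xi n y -> 0 < a -> a <= b -> b < 1 ->
  ex_RInt (quantile_gap y) a b /\
  RInt (quantile_gap y) a b =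
  sumR n (fun j => RInt (loss (y j)) (clamped_sum a b j) (clamped_sum a b (S j))).
Proof.
  intros; rewrite <- (clamped_sum_n a b) at 1 2 by easy.
  apply RInt_quantile_gap_split; auto.
Qed.

Definition atom_cost (y : nat -> R) (j : nat) : R :=
  if Rlt_dec 0 (p j) then cell_cost p j (y j) else 0.

Definition total_cost (y : nat -> R) : R := sumR n (atom_cost y).

Lemma RInt_quantile_gap_le_total_cost y a b : in_Xi n y -> 0 < a -> a <= b -> b < 1 ->
  RInt (quantile_gap y) a b <= total_cost y.
Proof.
  intros Hy Ha Hab Hb; rewrite (proj2 (RInt_quantile_gap_sum y a b Hy Ha Hab Hb)).
  apply sumR_le; intros k Hk.
  assert (R1 := clamped_sum_range a b k Hab); assert (R2 := clamped_sum_range a b (S k) Hab).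
  destruct (Rle_lt_or_eq_dec _ _ (clamped_sum_le_succ a b k Hk)) as [Hlt|Heq].
  - destruct (clamped_sum_in_cell a b k Hab Hlt) as [C1 C2].
    unfold atom_cost; destruct (Rlt_dec 0 (p k)) as [Hpk|Hpk]; [|simpl in C2; lra].
    apply RInt_loss_le_cell_cost with n; auto; red; lra.
  - rewrite Heq, (RInt_point (V := R_CompleteNormedModule)).
    unfold atom_cost; destruct (Rlt_dec 0 (p k)); [apply cell_cost_ge0 with n; auto | right; reflexivity].
Qed.

(* Choose in each charged cell a subinterval almost achieving its cost; the
   clamped sums of any larger window [A', B'] cover these subintervals. *)
Lemma total_cost_prefix_approx y eps : 0 < eps -> forall k, (k <= n)%nat ->
  exists A B, 0 < A /\ A <= B /\ B < 1 /\
  forall A' B', 0 < A' -> A' <= A -> B <= B' -> B' < 1 ->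
  sumR k (atom_cost y) <= sumR k (fun j => RInt (loss (y j)) (clamped_sum A' B' j) (clamped_sum A' B' (S j)))
     + INR k * eps.
Proof.
  intros He; induction k as [|k IHk]; intros Hk.
  { exists (1 / 2), (1 / 2); repeat split; try lra; intros; simpl; lra. }
  destruct IHk as [A0 [B0 [HA0 [HAB0 [HB0 IH]]]]]; [lia|].
  assert (Hpk0 : 0 <= p k) by (apply Hp; lia).
  destruct (Rlt_dec 0 (p k)) as [Hpk|Hpk].
  - destruct (cell_cost_approx HM n p k Hp ltac:(lia) Hpk (y k) eps He)
      as [u [v [[U1 [U2 [U3 [U4 U5]]]] Huv]]].
    exists (Rmin A0 u), (Rmax B0 v).
    assert (Rmin A0 u <= A0) by apply Rmin_l; assert (Rmin A0 u <= u) by apply Rmin_r.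
    assert (B0 <= Rmax B0 v) by apply Rmax_l; assert (v <= Rmax B0 v) by apply Rmax_r.
    split; [apply Rmin_pos; lra|]; split; [lra|]; split; [apply Rmax_lub_lt; lra|].
    intros A' B' HA' HA'A HBB' HB'.
    specialize (IH A' B' HA' ltac:(lra) ltac:(lra) HB').
    destruct (clamped_sum_around A' B' u v k) as [W1 W2]; try lra.
    assert (S1 := clamped_sum_range A' B' k ltac:(lra)).
    assert (S2 := clamped_sum_range A' B' (S k) ltac:(lra)).
    assert (RInt (loss (y k)) u v
            <= RInt (loss (y k)) (clamped_sum A' B' k) (clamped_sum A' B' (S k)))
      by (apply RInt_loss_le_superinterval; lra).
    simpl sumR; rewrite S_INR; unfold atom_cost at 2; destruct (Rlt_dec 0 (p k)); lra.
  - exists A0, B0; repeat split; auto; intros A' B' HA' HA'A HBB' HB'.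
    specialize (IH A' B' HA' HA'A HBB' HB').
    assert (Hm := clamped_sum_le_succ A' B' k ltac:(lia)).
    assert (S1 := clamped_sum_range A' B' k ltac:(lra)).
    assert (S2 := clamped_sum_range A' B' (S k) ltac:(lra)).
    assert (0 <= RInt (loss (y k)) (clamped_sum A' B' k) (clamped_sum A' B' (S k)))
      by (apply RInt_loss_ge0; lra).
    simpl sumR; rewrite S_INR; unfold atom_cost at 2; destruct (Rlt_dec 0 (p k)); lra.
Qed.

Lemma total_cost_approx y eps : in_Xi n y -> 0 < eps ->
  exists A B, 0 < A /\ A <= B /\ B < 1 /\ total_cost y <= RInt (quantile_gap y) A B + eps.
Proof.
  intros Hy He; assert (Hn : 0 < INR n + 1) by (assert (A := pos_INR n); lra).
  destruct (total_cost_prefix_approx y (eps / (INR n + 1)) ltac:(apply Rdiv_lt_0_compat; lra)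
              n (le_n n)) as [A [B [HA [HAB [HB Happrox]]]]].
  exists A, B; repeat split; auto.
  rewrite (proj2 (RInt_quantile_gap_sum y A B Hy HA HAB HB)).
  eapply Rle_trans; [apply (Happrox A B); lra|]; apply Rplus_le_compat_l.
  apply Rmult_le_reg_r with (INR n + 1); [lra|].
  replace (INR n * (eps / (INR n + 1)) * (INR n + 1)) with (INR n * eps) by (field; lra); nra.
Qed.

Lemma dr_pow_total_cost y : in_Xi n y -> dr_pow r (discrete_cdf n p y) F (total_cost y).
Proof.
  intros Hy; change (int01 (quantile_gap y) (total_cost y)); split.
  - intros s [a [b [pr [Ha [Hab [Hb ->]]]]]].
    rewrite <- (RInt_Reals _ _ _ pr); apply RInt_quantile_gap_le_total_cost; auto.
  - intros c Hc; apply Rle_plus_epsilon; intros eps He.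
    destruct (total_cost_approx y eps Hy He) as [A [B [HA [HAB [HB Happrox]]]]].
    assert (E := proj1 (RInt_quantile_gap_sum y A B Hy HA HAB HB)).
    assert (RInt (quantile_gap y) A B <= c); [|lra].
    apply Hc; exists A, B, (ex_RInt_Reals_0 _ _ _ E); repeat split; auto.
    rewrite (RInt_Reals _ _ _ (ex_RInt_Reals_0 _ _ _ E)); easy.
Qed.

End Discrete.

Section Atoms.

Hypothesis HM : finite_moment r F.
Variables (n : nat) (p : nat -> R).
Hypothesis Hp : in_Pi n p.

Lemma admissible_atoms_ordered i j x y : (i < j)%nat -> (j < n)%nat -> 0 < p i -> 0 < p j ->
  admissible_atom p i x -> admissible_atom p j y -> x <= y.
Proof.
  intros Hij Hj Hpi Hpj [_ [Hx _]] [Hy _].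
  destruct (cell_bounds n p i Hp ltac:(lia) Hpi) as [Ci0 [Ci1 Ci2]].
  destruct (cell_bounds n p j Hp Hj Hpj) as [Cj0 [Cj1 Cj2]].
  assert (sumR (S i) p <= sumR j p) by (apply (sumR_prefix_le n); [apply Hp | lia]).
  apply Rle_trans with (quantile F (sumR (S i) p)); [apply Hx | apply Hy]; lra.
Qed.

Lemma exists_admissible_atoms : r = 1 \/ connected_set (supp F) ->
  exists z, forall i, (i < n)%nat -> 0 < p i -> admissible_atom p i (z i).
Proof.
  intros Hcase; apply (choice (fun i x => (i < n)%nat -> 0 < p i -> admissible_atom p i x)).
  intros i; destruct (classic ((i < n)%nat /\ 0 < p i)) as [[Hi Hpi]|Hni];
    [|exists 0; intros Hi Hpi; tauto].
  destruct Hcase as [Hr1|Hconn].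
  - eexists; intros _ _; apply (admissible_atom_median HM n p i Hp Hi Hpi Hr1).
  - destruct (admissible_atom_connected HM n p i Hp Hi Hpi Hconn) as [x Hx]; exists x; auto.
Qed.

Lemma is_minimizer_of_admissible x : in_Xi n x ->
  (forall i, (i < n)%nat -> 0 < p i -> admissible_atom p i (x i)) -> is_minimizer r F n p x.
Proof.
  intros Hx Hadm; exists (total_cost n p x); split; [apply dr_pow_total_cost; auto|].
  intros y c Hy Hc; rewrite (is_lub_u _ _ _ Hc (dr_pow_total_cost HM n p Hp y Hy)).
  apply sumR_le; intros i Hi; unfold atom_cost; destruct (Rlt_dec 0 (p i)) as [Hpi|]; [|lra].
  apply (Hadm i Hi Hpi).
Qed.

End Atoms.

End Loss.

Theorem proposition5 (r : R) (F : R -> R) (n : nat) (p : nat -> R) :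
  1 <= r -> is_cdf F -> finite_moment r F -> in_Pi n p ->
  (r = 1 \/ connected_set (supp F)) ->
  exists x : nat -> R,
    in_Xi n x /\ is_minimizer r F n p x /\
    (forall y, supp (discrete_cdf n p x) y -> supp F y).
Proof.
  intros Hr HF HM Hp Hcase.
  destruct (exists_admissible_atoms r F Hr HF HM n p Hp Hcase) as [z Hz].
  destruct (monotone_extension n (fun i => 0 < p i) z) as [x [Hx Hxz]].
  { intros i j Hij Hpi Hpj; destruct (Nat.eq_dec i j) as [->|]; [lra|].
    apply (admissible_atoms_ordered r F n p Hp i j); try apply Hz; auto; lia. }
  exists x; split; [|split]; [easy| |].
  - apply is_minimizer_of_admissible; auto.
    intros i Hi Hpi; rewrite Hxz by auto; apply Hz; auto.
  - intros y Hy; destruct (supp_discrete_cdf n p x y Hp Hy) as [i [Hi [Hpi <-]]].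
    rewrite Hxz by auto; apply (Hz i Hi Hpi).
Qed.
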